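(* Let $M=(S,\mathrm{Act},P)$ be an MDP, $T\subseteq S$, $\mathrm{rew}\colon S\to\mathbb{R}_{\ge0}$, $\mathrm{opt}\in\{\min,\max\}$. Let $(x,r)\in[0,\infty]^S\times\mathbb{N}_\infty^S$ satisfy: (1) $\tilde D^{\overline{\mathrm{opt}}}(r)\le r$; (2) $x\le E^{\mathrm{opt}}(x)$; (3) for all $s\in S$, $x(s)=\infty$ implies $r(s)<\infty$ (inequalities pointwise). Then $\mathbb{E}^{\mathrm{opt}}_s(\Diamond T)\ge x(s)$ for all $s\in S$.
   Context: An MDP is a tuple $M=(S,\mathrm{Act},P)$ with $S$ finite, $\mathrm{Act}$ finite, $P\colon S\times\mathrm{Act}\times S\to[0,1]$ with $\sum_{s'}P(s,a,s')\in\{0,1\}$; $\mathrm{Act}(s)=\{a\mid\sum_{s'}P(s,a,s')=1\}$ is nonempty for all $s$; $\mathrm{Post}(s,a)=\{s'\mid P(s,a,s')>0\}$. A strategy is $\sigma\colon S\to\mathrm{Act}$ with $\sigma(s)\in\mathrm{Act}(s)$, inducing a Markov chain with transitions $P(s,\sigma(s),\cdot)$. $\overline{\min}=\max$, $\overline{\max}=\min$. For an infinite path $s_0s_1\ldots$, the accumulated reward is $\sum_{k=0}^{n-1}\mathrm{rew}(s_k)$ with $n=\min\{i\mid s_i\in T\}$ if $T$ is visited, and $\infty$ otherwise; $\mathbb{E}^\sigma_s(\Diamond T)$ is its expectation under $\sigma$ from $s$, $\mathbb{E}^{\mathrm{opt}}_s(\Diamond T)=\mathrm{opt}_\sigma\mathbb{E}^\sigma_s(\Diamond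 T)$. $E^{\mathrm{opt}}(x)(s)=0$ for $s\in T$ and $\mathrm{rew}(s)+\mathrm{opt}_{a\in\mathrm{Act}(s)}\sum_{s'\in\mathrm{Post}(s,a)}P(s,a,s')x(s')$ for $s\notin T$, with $p\cdot\infty=\infty$ for $p>0$, $a+\infty=\infty$. $\mathbb{N}_\infty=\mathbb{N}\cup\{\infty\}$. For $\mathrm{opt}'\in\{\min,\max\}$, the complementary distance operator is $\tilde D^{\mathrm{opt}'}(r)(s)=\infty$ for $s\in T$ and $\mathrm{opt}'_{a\in\mathrm{Act}(s)}\big(\min_{s'\in\mathrm{Post}(s,a)}r(s')+[\exists u,v\in\mathrm{Post}(s,a)\colon r(u)\ne r(v)]\big)$ for $s\notin T$, where $[\varphi]\in\{0,1\}$ is the Iverson bracket and $\infty+1=\infty$. *)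

From HB Require Import structures.
From mathcomp Require Import all_boot all_order all_algebra.
From mathcomp Require Import all_classical all_reals all_analysis.

Set Implicit Arguments.
Unset Strict Implicit.
Unset Printing Implicit Defensive.

Import Order.TTheory GRing.Theory Num.Theory.
Local Open Scope ring_scope.

Inductive opt_kind := OptMin | OptMax.
Definition opt_dual (o : opt_kind) : opt_kind :=
  match o with OptMin => OptMax | OptMax => OptMin end.

(* N_oo = N u {oo}, with None standing for oo *)
Definition natinf := option nat.
Definition ni_le (a b : natinf) : bool :=
  match a, b with
  | _, None => true
  | None, Some _ => false
  | Some m, Some n => (m <= n)%N
  end.
Definition ni_min (a b : natinf) : natinf :=
  match a, b with
  | None, b => b
  | a, None => a
  | Some m, Some n => Some (minn m n)
  end.
Definition ni_max (a b : natinf) : natinf :=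
  match a, b with
  | None, _ => None
  | _, None => None
  | Some m, Some n => Some (maxn m n)
  end.
Definition ni_addn (a : natinf) (k : nat) : natinf := omap (fun m => (m + k)%N) a.

Section MDPDefs.
Variables (R : realType) (S Act : finType).
Variable P : S -> Act -> S -> R.

Definition is_MDP : Prop :=
  [/\ (forall s a s', 0 <= P s a s' <= 1),
      (forall s a, \sum_(s' : S) P s a s' = 0 \/ \sum_(s' : S) P s a s' = 1) &
      (forall s, exists a, \sum_(s' : S) P s a s' = 1)].

Definition enabled (s : S) (a : Act) : bool := \sum_(s' : S) P s a s' == 1.
Definition post (s : S) (a : Act) (s' : S) : bool := 0 < P s a s'.

Definition strategy (sigma : {ffun S -> Act}) : bool :=
  [forall s, enabled s (sigma s)].

Variable T : {set S}.
Variable rew : S -> R.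

(* finite paths of length n (n transitions) are functions 'I_n.+1 -> S *)
Definition prev_st n (p : {ffun 'I_n.+1 -> S}) (i : 'I_n) : S :=
  p (widen_ord (leqnSn n) i).
Definition next_st n (p : {ffun 'I_n.+1 -> S}) (i : 'I_n) : S :=
  p (lift ord0 i).

Definition first_hit (s : S) n (p : {ffun 'I_n.+1 -> S}) : bool :=
  [&& p ord0 == s, p ord_max \in T & [forall i : 'I_n, prev_st p i \notin T]].

Definition path_prob (sigma : {ffun S -> Act}) n (p : {ffun 'I_n.+1 -> S}) : R :=
  \prod_(i < n) P (prev_st p i) (sigma (prev_st p i)) (next_st p i).

Definition path_rew n (p : {ffun 'I_n.+1 -> S}) : R :=
  \sum_(i < n) rew (prev_st p i).

Local Open Scope ereal_scope.

(* Pr^sigma_s(<> T): the event <>T is the disjoint union of the cylinders of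
   the first-hitting paths *)
Definition prob_reach (sigma : {ffun S -> Act}) (s : S) : \bar R :=
  \sum_(n <oo) \sum_(p : {ffun 'I_n.+1 -> S} | first_hit s p) (path_prob sigma p)%:E.

(* E^sigma_s(<> T): expectation of the accumulated reward, which is oo on the
   paths never visiting T; hence it is oo as soon as Pr(<>T) < 1, and otherwise
   it is the sum over the (countably many, disjoint) first-hitting cylinders. *)
Definition exp_rew (sigma : {ffun S -> Act}) (s : S) : \bar R :=
  if prob_reach sigma s == 1 then
    \sum_(n <oo) \sum_(p : {ffun 'I_n.+1 -> S} | first_hit s p)
        ((path_prob sigma p) * (path_rew p))%:E
  else +oo.

Definition exp_rew_opt (o : opt_kind) (s : S) : \bar R :=
  match o with
  | OptMin => \big[mine/+oo]_(sigma | strategy sigma) exp_rew sigma s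
  | OptMax => \big[maxe/-oo]_(sigma | strategy sigma) exp_rew sigma s
  end.

(* the Bellman operator E^opt; note (p%:E * +oo) = +oo for p > 0 *)
Definition bellman_val (x : S -> \bar R) (s : S) (a : Act) : \bar R :=
  \sum_(s' | post s a s') (P s a s')%:E * x s'.

Definition E_op (o : opt_kind) (x : S -> \bar R) (s : S) : \bar R :=
  if s \in T then 0 else
  (rew s)%:E +
  match o with
  | OptMin => \big[mine/+oo]_(a | enabled s a) bellman_val x s a
  | OptMax => \big[maxe/-oo]_(a | enabled s a) bellman_val x s a
  end.

Local Close Scope ereal_scope.

Definition Dt_val (r : S -> natinf) (s : S) (a : Act) : natinf :=
  ni_addn (\big[ni_min/None]_(s' | post s a s') r s')
          [exists u, exists v, [&& post s a u, post s a v & r u != r v]].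

Definition Dtilde (o : opt_kind) (r : S -> natinf) (s : S) : natinf :=
  if s \in T then None else
  match o with
  | OptMin => \big[ni_min/None]_(a | enabled s a) Dt_val r s a
  | OptMax => \big[ni_max/Some 0%N]_(a | enabled s a) Dt_val r s a
  end.

End MDPDefs.

From Pilot Require Import Defs.
From HB Require Import structures.
From mathcomp Require Import all_boot all_order all_algebra.
From mathcomp Require Import all_classical all_reals all_analysis.
From mathcomp Require Import lra zify.
Import Order.TTheory GRing.Theory Num.Theory.
Local Open Scope ring_scope.

Set Implicit Arguments.
Unset Strict Implicit.
Unset Printing Implicit Defensive.

(* Fix a memoryless strategy and split the reachability probability Pr and the
   expected reward E of the induced chain along the length of the first path
   that hits T.  A set of states avoiding T and closed under successors is
   never left, so it has Pr = 0; both steps of the proof exhibit such a trap.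
   First, Pr(s) = 1 forces r(s) = oo, hence x(s) < oo.  Second, on the states
   with Pr = 1 and E < oo, x - E is subharmonic and nonpositive on T, so
   x <= E there.  Both steps only need the strategy to play actions certified
   by (x, r): for opt = min every strategy does, for opt = max such actions are
   chosen state by state. *)

Lemma ni_maxA : associative ni_max.
Proof. by case=> [a|] [b|] [c|] //=; rewrite maxnA. Qed.

Lemma ni_maxC : commutative ni_max.
Proof. by case=> [a|] [b|] //=; rewrite maxnC. Qed.

Lemma ni_max0 : left_id (Some 0%N) ni_max.
Proof. by case=> //= n; rewrite max0n. Qed.

HB.instance Definition _ :=
  Monoid.isComLaw.Build natinf (Some 0%N) ni_max ni_maxA ni_maxC ni_max0.

Lemma ni_max_le a b c : ni_le (ni_max a b) c -> ni_le a c.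
Proof. by case: a b c => [a|] [b|] [c|] //=; rewrite geq_max => /andP[]. Qed.

Lemma ni_min_sel a b : ni_min a b = a \/ ni_min a b = b.
Proof.
case: a b => [a|] [b|] /=; try by [left | right].
by rewrite /minn; case: ifP; [left | right].
Qed.

Lemma big_selective (X I : Type) (op : X -> X -> X) (idx : X) (s : seq I)
    (p : pred I) (F : I -> X) :
  (forall a b, op a b = a \/ op a b = b) ->
  \big[op/idx]_(i <- s | p i) F i = idx \/
  exists2 i, p i & F i = \big[op/idx]_(i <- s | p i) F i.
Proof.
move=> op_sel; apply: (big_ind (fun y => y = idx \/ exists2 i, p i & F i = y)).
- by left.
- by move=> a b Ha Hb; case: (op_sel a b) => ->.
- by move=> i pi; right; exists i.
Qed.

Lemma nneseries_shift (R : realType) (f : nat -> \bar R) :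
  (forall n, 0 <= f n)%E -> (\sum_(n <oo) f n = f 0%N + \sum_(n <oo) f n.+1)%E.
Proof.
move=> f_ge0; rewrite nneseries_recl // -(nneseries_addn 1) //.
by under eq_eseriesr do rewrite addn1.
Qed.

Section FirstHittingPaths.
Variables (R : realType) (S Act : finType) (P : S -> Act -> S -> R).
Variables (T : {set S}) (rew : S -> R) (sigma : {ffun S -> Act}).

Local Notation Q u v := (P u (sigma u) v).

Definition path_cons n (a : S) (q : {ffun 'I_n.+1 -> S}) : {ffun 'I_n.+2 -> S} :=
  [ffun i => if unlift ord0 i is Some j then q j else a].

Lemma path_cons0 n a (q : {ffun 'I_n.+1 -> S}) : path_cons a q ord0 = a.
Proof. by rewrite ffunE unlift_none. Qed.

Lemma path_consS n a (q : {ffun 'I_n.+1 -> S}) j : path_cons a q (lift ord0 j) = q j.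
Proof. by rewrite ffunE liftK. Qed.

Lemma path_cons_bij n :
  bijective (fun aq : S * {ffun 'I_n.+1 -> S} => path_cons aq.1 aq.2).
Proof.
exists (fun p : {ffun 'I_n.+2 -> S} => (p ord0, [ffun j => p (lift ord0 j)])).
  move=> [a q] /=; rewrite path_cons0; congr pair.
  by apply/ffunP => j; rewrite ffunE path_consS.
move=> p; apply/ffunP => i; rewrite ffunE.
by case: unliftP => [j ->|->]; rewrite ?ffunE.
Qed.

Lemma prev_st_cons0 n a (q : {ffun 'I_n.+1 -> S}) :
  prev_st (path_cons a q) ord0 = a.
Proof.
by rewrite /prev_st (_ : widen_ord _ _ = ord0) ?path_cons0 //; apply: val_inj.
Qed.

Lemma prev_st_consS n a (q : {ffun 'I_n.+1 -> S}) j :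
  prev_st (path_cons a q) (lift ord0 j) = prev_st q j.
Proof.
rewrite /prev_st (_ : widen_ord _ _ = lift ord0 (widen_ord (leqnSn n) j)).
  exact: path_consS.
exact: val_inj.
Qed.

Lemma next_st_cons n a (q : {ffun 'I_n.+1 -> S}) j :
  next_st (path_cons a q) j = q j.
Proof. exact: path_consS. Qed.

Lemma forall_ord_recl n (F : 'I_n.+1 -> bool) :
  [forall i, F i] = F ord0 && [forall j : 'I_n, F (lift ord0 j)].
Proof.
apply/forallP/andP => [F_all|[F0 /forallP F_lift] i].
  by split=> //; apply/forallP.
by case: (unliftP ord0 i) => [j ->|->].
Qed.

Lemma first_hit_cons n s a (q : {ffun 'I_n.+1 -> S}) :
  first_hit T s (path_cons a q) = [&& a == s, a \notin T & first_hit T (q ord0) q].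
Proof.
rewrite /first_hit path_cons0 eqxx forall_ord_recl prev_st_cons0.
under eq_forallb do rewrite prev_st_consS.
rewrite (_ : ord_max = lift ord0 ord_max) ?path_consS; last exact: val_inj.
by case: (a == s) (a \in T) (q ord_max \in T) => [] [] [].
Qed.

Lemma path_prob_cons n a (q : {ffun 'I_n.+1 -> S}) :
  path_prob P sigma (path_cons a q) = Q a (q ord0) * path_prob P sigma q.
Proof.
rewrite /path_prob big_ord_recl prev_st_cons0 next_st_cons.
by under eq_bigr do rewrite prev_st_consS next_st_cons.
Qed.

Lemma path_rew_cons n a (q : {ffun 'I_n.+1 -> S}) :
  path_rew rew (path_cons a q) = rew a + path_rew rew q.
Proof.
rewrite /path_rew big_ord_recl prev_st_cons0.
by under eq_bigr do rewrite prev_st_consS.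
Qed.

Lemma sum_first_hit0 s (G : {ffun 'I_1 -> S} -> R) :
  \sum_(p | first_hit T s p) G p = if s \in T then G [ffun => s] else 0.
Proof.
have first_hitE (p : {ffun 'I_1 -> S}) :
    first_hit T s p = (p == [ffun => s]) && (s \in T).
  rewrite /first_hit (_ : ord_max = ord0 :> 'I_1); last exact: val_inj.
  have -> : [forall i : 'I_0, prev_st p i \notin T] by apply/forallP => -[].
  rewrite andbT.
  have -> : (p == [ffun => s]) = (p ord0 == s).
    apply/eqP/eqP => [->|p0]; first by rewrite ffunE.
    by apply/ffunP => i; rewrite ffunE (ord1 i).
  by case: eqP => [->|].
under eq_bigl do rewrite first_hitE.
case: ifP => sT; last by rewrite big_pred0 // => p; rewrite andbF.
by under eq_bigl do rewrite andbT; rewrite big_pred1_eq.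
Qed.

Lemma sum_first_hitS n s (G : {ffun 'I_n.+2 -> S} -> R) :
  \sum_(p | first_hit T s p) G p =
  if s \in T then 0
  else \sum_v \sum_(q : {ffun 'I_n.+1 -> S} | first_hit T v q) G (path_cons s q).
Proof.
rewrite (reindex _ (onW_bij _ (path_cons_bij n))) /=.
under eq_bigl do rewrite first_hit_cons.
case: ifPn => sT.
  by rewrite big_pred0 // => -[a q] /=; case: eqP => // ->; rewrite sT.
rewrite -(pair_big_dep (fun a => a == s)
  (fun a (q : {ffun 'I_n.+1 -> S}) => (a \notin T) && first_hit T (q ord0) q)
  (fun a q => G (path_cons a q))) /= (big_pred1 s) // sT /=.
rewrite (partition_big (fun q : {ffun 'I_n.+1 -> S} => q ord0) predT) //=.
apply: eq_bigr => v _; apply: eq_bigl => q.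
case: (eqVneq (q ord0) v) => [<-|ne]; first by rewrite andbT.
by rewrite andbF /first_hit (negbTE ne).
Qed.

Definition hit_prob n s :=
  \sum_(p : {ffun 'I_n.+1 -> S} | first_hit T s p) path_prob P sigma p.

Definition hit_rew n s :=
  \sum_(p : {ffun 'I_n.+1 -> S} | first_hit T s p)
    path_prob P sigma p * path_rew rew p.

Lemma hit_prob0 s : hit_prob 0 s = (s \in T)%:R.
Proof. by rewrite /hit_prob sum_first_hit0 /path_prob big_ord0; case: (s \in T). Qed.

Lemma hit_rew0 s : hit_rew 0 s = 0.
Proof.
by rewrite /hit_rew sum_first_hit0 /path_rew big_ord0 mulr0; case: (s \in T).
Qed.

Lemma hit_probS n s :
  hit_prob n.+1 s = if s \in T then 0 else \sum_v Q s v * hit_prob n v.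
Proof.
rewrite /hit_prob sum_first_hitS; case: ifP => // _.
apply: eq_bigr => v _; rewrite mulr_sumr; apply: eq_bigr => q /andP[/eqP <- _].
by rewrite path_prob_cons.
Qed.

Lemma hit_rewS n s : hit_rew n.+1 s =
  if s \in T then 0 else \sum_v Q s v * (rew s * hit_prob n v + hit_rew n v).
Proof.
rewrite /hit_rew sum_first_hitS; case: ifP => // _.
apply: eq_bigr => v _; rewrite /hit_prob mulr_sumr -big_split mulr_sumr /=.
apply: eq_bigr => q /andP[/eqP <- _].
rewrite path_prob_cons path_rew_cons; lra.
Qed.

End FirstHittingPaths.

Section InducedChain.
Variables (R : realType) (S Act : finType) (P : S -> Act -> S -> R).
Variables (T : {set S}) (rew : S -> R) (sigma : {ffun S -> Act}).
Hypothesis P_ge0 : forall u v, 0 <= P u (sigma u) v.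
Hypothesis sigma_stoch : forall u, \sum_v P u (sigma u) v = 1.
Hypothesis rew_ge0 : forall s, 0 <= rew s.

Local Notation Q u v := (P u (sigma u) v).
Local Notation post u := (post P u (sigma u)).
Local Notation H := (hit_prob P T sigma).
Local Notation K := (hit_rew P T rew sigma).
Local Notation Pr := (prob_reach P T sigma).

Lemma prob_notpost u v : ~~ post u v -> Q u v = 0.
Proof. by rewrite /Defs.post lt_neqAle P_ge0 andbT negbK => /eqP. Qed.

Lemma sum_prob_post u (f : S -> R) :
  \sum_v Q u v * f v = \sum_(v | post u v) Q u v * f v.
Proof.
rewrite (bigID (post u)) /= [X in _ + X]big1 ?addr0 // => v /prob_notpost ->.
exact: mul0r.
Qed.

Lemma sum_post_prob u : \sum_(v | post u v) Q u v = 1.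
Proof.
rewrite -(sigma_stoch u) [in RHS](bigID (post u)) /=.
by rewrite [X in _ = _ + X]big1 ?addr0 // => v /prob_notpost.
Qed.

Lemma post_eq_max u (f : S -> R) c :
  (forall v, post u v -> f v <= c) -> c <= \sum_(v | post u v) Q u v * f v ->
  forall v, post u v -> f v = c.
Proof.
move=> f_le c_le v uv.
have gap_ge0 w : post u w -> 0 <= Q u w * (c - f w).
  by move=> uw; rewrite mulr_ge0 // subr_ge0 f_le.
have gap0 : \sum_(w | post u w) Q u w * (c - f w) = 0.
  apply/eqP; rewrite eq_le sumr_ge0 // andbT.
  under eq_bigr do rewrite mulrBr.
  by rewrite sumrB -mulr_suml sum_post_prob mul1r subr_le0.
have /eqP := psumr_eq0P gap_ge0 gap0 uv.
rewrite mulf_eq0 subr_eq0 => /orP[/eqP Q0|/eqP //].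
by move: uv; rewrite /Defs.post Q0 ltxx.
Qed.

Lemma hit_prob_ge0 n s : 0 <= H n s.
Proof.
elim: n s => [|n IH] s; first by rewrite hit_prob0; case: (s \in T).
rewrite hit_probS; case: ifP => // _.
by apply: sumr_ge0 => v _; rewrite mulr_ge0.
Qed.

Lemma hit_rew_ge0 n s : 0 <= K n s.
Proof.
elim: n s => [|n IH] s; first by rewrite hit_rew0.
rewrite hit_rewS; case: ifP => // _.
by apply: sumr_ge0 => v _; rewrite mulr_ge0 ?addr_ge0 ?mulr_ge0 ?hit_prob_ge0.
Qed.

Lemma sum_hit_prob_le1 N s : \sum_(0 <= n < N) H n s <= 1.
Proof.
elim: N s => [|N IH] s; first by rewrite big_geq.
rewrite big_nat_recl // hit_prob0.
have [sT|sT] := boolP (s \in T).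
  by rewrite big1 ?addr0 // => n _; rewrite hit_probS sT.
rewrite add0r; under eq_bigr do rewrite hit_probS (negbTE sT).
rewrite exchange_big /= -(sigma_stoch s); apply: ler_sum => v _.
by rewrite -mulr_sumr ler_piMr.
Qed.

Local Open Scope ereal_scope.

Definition reach_rew s := \sum_(n <oo) (K n s)%:E.

Lemma prob_reachE s : Pr s = \sum_(n <oo) (H n s)%:E.
Proof. by apply: eq_eseriesr => n _; rewrite sumEFin. Qed.

Lemma exp_rewE s : exp_rew P T rew sigma s = if Pr s == 1 then reach_rew s else +oo.
Proof.
rewrite /exp_rew; case: ifP => // _.
by apply: eq_eseriesr => n _; rewrite sumEFin.
Qed.

Lemma prob_reach_ge0 s : 0 <= Pr s.
Proof.
by rewrite prob_reachE nneseries_ge0 // => n _ _; rewrite lee_fin hit_prob_ge0.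
Qed.

Lemma reach_rew_ge0 s : 0 <= reach_rew s.
Proof. by rewrite nneseries_ge0 // => n _ _; rewrite lee_fin hit_rew_ge0. Qed.

Lemma prob_reach_le1 s : Pr s <= 1.
Proof.
rewrite prob_reachE; apply: lime_le.
  by apply: is_cvg_nneseries => n _ _; rewrite lee_fin hit_prob_ge0.
by apply: nearW => N; rewrite sumEFin lee_fin sum_hit_prob_le1.
Qed.

Lemma prob_reach_fin_num s : Pr s \is a fin_num.
Proof.
by rewrite ge0_fin_numE ?prob_reach_ge0 // (le_lt_trans (prob_reach_le1 s)) ?ltry.
Qed.

Lemma reach_rew_T s : s \in T -> reach_rew s = 0.
Proof.
move=> sT; rewrite /reach_rew eseries0 // => -[|n] _ _;
  by rewrite ?hit_rew0 ?hit_rewS ?sT.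
Qed.

Lemma prob_reach_notT s : s \notin T -> Pr s = \sum_v (Q s v)%:E * Pr v.
Proof.
have H_ge0 n v : 0 <= (H n v)%:E by rewrite lee_fin hit_prob_ge0.
move=> sT; rewrite prob_reachE nneseries_shift // hit_prob0 (negbTE sT) add0e.
under eq_eseriesr do rewrite hit_probS (negbTE sT) -sumEFin.
rewrite nneseries_sum => [|v n _]; last by rewrite lee_fin mulr_ge0 ?hit_prob_ge0.
by apply: eq_bigr => v _; rewrite prob_reachE -nneseriesZl.
Qed.

Lemma reach_rew_notT s : s \notin T ->
  reach_rew s = \sum_v (Q s v)%:E * ((rew s)%:E * Pr v + reach_rew v).
Proof.
have H_ge0 n v : 0 <= (H n v)%:E by rewrite lee_fin hit_prob_ge0.
have K_ge0 n v : 0 <= (K n v)%:E by rewrite lee_fin hit_rew_ge0.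
have rH_ge0 n v : 0 <= (rew s)%:E * (H n v)%:E.
  by rewrite mule_ge0 ?lee_fin ?rew_ge0 ?hit_prob_ge0.
move=> sT; rewrite /reach_rew nneseries_shift // hit_rew0 add0e.
under eq_eseriesr do rewrite hit_rewS (negbTE sT) -sumEFin.
rewrite nneseries_sum => [|v n _]; last first.
  by rewrite lee_fin mulr_ge0 ?addr_ge0 ?mulr_ge0 ?hit_prob_ge0 ?hit_rew_ge0.
apply: eq_bigr => v _; rewrite prob_reachE -nneseriesZl => [|n _] //.
rewrite -nneseriesD => [|n _ _|n _ _] //.
rewrite -nneseriesZl => [|n _]; last by rewrite adde_ge0.
by apply: eq_eseriesr => n _; rewrite EFinM EFinD EFinM.
Qed.

Lemma prob_reach_post s v : s \notin T -> Pr s = 1 -> post s v -> Pr v = 1.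
Proof.
move=> sT Pr_s sv; pose f w := fine (Pr w).
have PrE w : Pr w = (f w)%:E by rewrite fineK ?prob_reach_fin_num.
have f_le1 w : post s w -> (f w <= 1)%R.
  by move=> _; rewrite -lee_fin -PrE prob_reach_le1.
have avg1 : (1 <= \sum_(w | post s w) Q s w * f w)%R.
  move: Pr_s; rewrite prob_reach_notT //.
  under eq_bigr do rewrite PrE -EFinM.
  by rewrite sumEFin sum_prob_post => -[->].
by rewrite PrE (post_eq_max f_le1 avg1 sv).
Qed.

Lemma reach_rew_post_lty s v :
  s \notin T -> reach_rew s < +oo -> post s v -> reach_rew v < +oo.
Proof.
have term_ge0 w : 0 <= (Q s w)%:E * ((rew s)%:E * Pr w + reach_rew w).
  by rewrite mule_ge0 ?adde_ge0 ?mule_ge0 ?lee_fin ?prob_reach_ge0 ?reach_rew_ge0.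
move=> sT E_s sv; rewrite ltNge leye_eq; apply/negP => /eqP rv_oo.
have neqNy (y : \bar R) : 0 <= y -> y != -oo.
  by move=> y_ge0; rewrite -ltNye (lt_le_trans (ltNyr 0%R) y_ge0).
move: E_s; rewrite reach_rew_notT // (bigD1 v) //= rv_oo addey; last first.
  by rewrite neqNy // mule_ge0 ?lee_fin ?prob_reach_ge0.
by rewrite mulry gtr0_sg // mul1e addye ?ltxx // neqNy ?sume_ge0.
Qed.

Lemma fine_reach_rew s : s \notin T -> Pr s = 1 -> reach_rew s < +oo ->
  fine (reach_rew s) = (rew s + \sum_(v | post s v) Q s v * fine (reach_rew v))%R.
Proof.
move=> sT Pr_s E_s; rewrite reach_rew_notT // (bigID (post s)) /=.
rewrite [X in _ + X]big1 ?adde0 => [|v /prob_notpost ->]; last exact: mul0e.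
under eq_bigr => v sv.
  rewrite (prob_reach_post sT Pr_s sv) mule1 -(fineK (x := reach_rew v)).
    by rewrite -EFinD -EFinM; over.
  by rewrite ge0_fin_numE ?reach_rew_ge0 ?(reach_rew_post_lty sT E_s sv).
rewrite sumEFin /=; under eq_bigr do rewrite mulrDr.
by rewrite big_split /= -mulr_suml sum_post_prob mul1r.
Qed.

Lemma trap_prob_reach0 (A : pred S) :
  (forall v, A v -> v \notin T) -> (forall v w, A v -> post v w -> A w) ->
  forall v, A v -> Pr v = 0.
Proof.
move=> AT A_closed.
have H0 n w : A w -> H n w = 0%R.
  elim: n w => [|n IH] w Aw; first by rewrite hit_prob0 (negbTE (AT w Aw)).
  rewrite hit_probS (negbTE (AT w Aw)) big1 // => u _.
  have [wu|/prob_notpost ->] := boolP (post w u); last exact: mul0r.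
  by rewrite IH ?mulr0 //; apply: A_closed wu.
by move=> v Av; rewrite prob_reachE eseries0 // => n _ _; rewrite H0.
Qed.

Lemma reach1_not_trapped (A : pred S) v :
  (forall v, A v -> v \notin T) -> (forall v w, A v -> post v w -> A w) ->
  A v -> Pr v != 1.
Proof.
by move=> AT A_closed /(trap_prob_reach0 AT A_closed) ->; rewrite eq_sym onee_eq0.
Qed.

(* Maximum principle: the states where [d] attains a positive maximum would
   form a trap. *)
Lemma reach1_subharmonic_le0 (D : pred S) (d : S -> R) :
  (forall v, D v -> Pr v = 1) ->
  (forall v w, D v -> v \notin T -> post v w -> D w) ->
  (forall v, D v -> v \in T -> (d v <= 0)%R) ->
  (forall v, D v -> v \notin T -> (d v <= \sum_(w | post v w) Q v w * d w)%R) ->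
  forall v, D v -> (d v <= 0)%R.
Proof.
move=> D_reach1 D_closed dT d_sub s Ds; rewrite leNgt; apply/negP => d_pos.
have [m Dm d_max] := arg_maxP d Ds.
have dm_pos : (0 < d m)%R by apply: lt_le_trans d_pos (d_max s Ds).
pose A v := D v && (d v == d m).
have AT v : A v -> v \notin T.
  by case/andP=> Dv /eqP dv; apply: contraTN dm_pos => /(dT v Dv); rewrite dv leNgt.
suff A_closed v w : A v -> post v w -> A w.
  have Am : A m by rewrite /A Dm eqxx.
  by have := reach1_not_trapped AT A_closed Am; rewrite D_reach1 ?eqxx.
move=> Av vw; have vT := AT v Av; case/andP: Av => Dv /eqP dv.
have Dw := D_closed v w Dv vT vw.
have d_le u : post v u -> (d u <= d m)%R by move=> vu; apply/d_max/(D_closed v).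
have avg : (d m <= \sum_(u | post v u) Q v u * d u)%R by rewrite -dv d_sub.
by rewrite /A Dw (post_eq_max d_le avg vw) eqxx.
Qed.

End InducedChain.

Lemma post_rank_eq (R : realType) (S Act : finType) (P : S -> Act -> S -> R)
    (r : S -> natinf) v a m :
  ni_le (Dt_val P r v a) (Some m) ->
  (forall w k, post P v a w -> r w = Some k -> (m <= k)%N) ->
  forall w, post P v a w -> r w = Some m.
Proof.
rewrite /Dt_val => + r_ge w vw.
have [->//|[u vu <-]] :=
  big_selective None (index_enum S) (post P v a) r ni_min_sel.
case ru: (r u) => [k|] //= Dt_le; have mk := r_ge u k vu ru.
set differ := [exists _, _] in Dt_le.
have flat : differ = false by move: Dt_le; case: differ => /=; lia.
have -> : r w = r u.
  apply/eqP; apply: contraFT flat => ne; apply/existsP; exists w.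
  by apply/existsP; exists u; rewrite vw vu ne.
by rewrite ru; congr Some; move: Dt_le; rewrite flat /=; lia.
Qed.

Definition cert_action (R : realType) (S Act : finType) (P : S -> Act -> S -> R)
    (T : {set S}) (rew : S -> R) (x : S -> \bar R) (r : S -> natinf) s a : Prop :=
  (s \notin T -> r s = None -> (x s <= (rew s)%:E + bellman_val P x s a)%E) /\
  (r s <> None -> ni_le (Dt_val P r s a) (r s)).

Section Certificate.
Variables (R : realType) (S Act : finType) (P : S -> Act -> S -> R).
Variables (T : {set S}) (rew : S -> R) (sigma : {ffun S -> Act}).
Variables (x : S -> \bar R) (r : S -> natinf).
Hypothesis P_ge0 : forall u v, 0 <= P u (sigma u) v.
Hypothesis sigma_stoch : forall u, \sum_v P u (sigma u) v = 1.
Hypothesis rew_ge0 : forall s, 0 <= rew s.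
Hypothesis x_ge0 : forall s, (0 <= x s)%E.
Hypothesis xT : forall s, s \in T -> (x s <= 0)%E.
Hypothesis rT : forall s, s \in T -> r s = None.
Hypothesis x_fin : forall s, x s = +oo%E -> r s <> None.
Hypothesis sigma_cert : forall s, cert_action P T rew x r s (sigma s).

Local Notation Q u v := (P u (sigma u) v).
Local Notation post u := (post P u (sigma u)).
Local Notation Pr := (prob_reach P T sigma).
Local Notation reach_rew := (reach_rew P T rew sigma).

Local Open Scope ereal_scope.

(* States of finite rank and reach probability 1 with least rank form a trap. *)
Lemma reach1_rank_inf s : Pr s = 1 -> r s = None.
Proof.
move=> Pr_s; case rs: (r s) => [k0|] //; exfalso.
pose good k v := (r v == Some k) && (Pr v == 1).
have ex_k : exists k, [exists v, good k v].
  by exists k0; apply/existsP; exists s; rewrite /good rs Pr_s !eqxx.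
case: (ex_minnP ex_k) => k /existsP[v0 good_v0] k_min.
have goodT v : good k v -> v \notin T.
  by case/andP=> /eqP rv _; apply/negP => /rT; rewrite rv.
suff good_closed v w : good k v -> post v w -> good k w.
  have := reach1_not_trapped P_ge0 goodT good_closed good_v0.
  by case/andP: good_v0 => _ ->.
move=> gv vw; have vT := goodT v gv; case/andP: gv => /eqP rv /eqP Pr_v.
have Pr_post u : post v u -> Pr u = 1 := prob_reach_post P_ge0 sigma_stoch vT Pr_v.
have Dt_le : ni_le (Dt_val P r v (sigma v)) (Some k).
  by rewrite -rv; apply: (sigma_cert v).2; rewrite rv.
rewrite /good (post_rank_eq Dt_le _ vw) ?Pr_post ?eqxx // => u j vu ru.
by apply: k_min; apply/existsP; exists u; rewrite /good ru Pr_post ?eqxx.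
Qed.

Definition settled v := (Pr v == 1) && (reach_rew v < +oo)%E.

Lemma settled_x_fin_num v : settled v -> x v \is a fin_num.
Proof.
case/andP=> /eqP/reach1_rank_inf rv _.
by rewrite ge0_fin_numE // ltey; apply/eqP => /x_fin.
Qed.

Lemma settled_post v w : settled v -> v \notin T -> post v w -> settled w.
Proof.
case/andP=> /eqP Pr_v E_v vT vw.
by rewrite /settled (prob_reach_post P_ge0 sigma_stoch vT Pr_v vw) eqxx
  (reach_rew_post_lty P_ge0 rew_ge0 vT E_v vw).
Qed.

Definition excess v := (fine (x v) - fine (reach_rew v))%R.

Lemma excess_subharmonic v : settled v -> v \notin T ->
  (excess v <= \sum_(w | post v w) Q v w * excess w)%R.
Proof.
move=> Sv vT; have /andP[/eqP Pr_v E_v] := Sv.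
have x_bell := (sigma_cert v).1 vT (reach1_rank_inf Pr_v).
have bellE :
    bellman_val P x v (sigma v) = (\sum_(w | post v w) Q v w * fine (x w))%:E.
  rewrite /bellman_val -sumEFin; apply: eq_bigr => w vw.
  by rewrite EFinM fineK // settled_x_fin_num // (settled_post Sv vT vw).
rewrite bellE -(fineK (settled_x_fin_num Sv)) -EFinD lee_fin in x_bell.
rewrite /excess (fine_reach_rew P_ge0 sigma_stoch rew_ge0 vT Pr_v E_v).
under [X in (_ <= X)%R]eq_bigr do rewrite mulrBr.
by rewrite sumrB; lra.
Qed.

Lemma x_le_exp_rew s : x s <= exp_rew P T rew sigma s.
Proof.
rewrite exp_rewE; have [Pr_s|] := eqVneq (Pr s) 1; last by rewrite leey.
have [E_s|] := boolP (reach_rew s < +oo); last first.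
  by rewrite -leNgt leye_eq => /eqP ->; rewrite leey.
have Ss : settled s by rewrite /settled Pr_s eqxx.
have : (excess s <= 0)%R.
  apply: (reach1_subharmonic_le0 (T := T) P_ge0 sigma_stoch (D := settled)) => //.
  - by move=> v /andP[/eqP].
  - exact: settled_post.
  - move=> v Sv vT; rewrite /excess reach_rew_T // subr0 -lee_fin.
    by rewrite fineK ?settled_x_fin_num ?xT.
  - exact: excess_subharmonic.
rewrite /excess subr_le0 -lee_fin fineK ?settled_x_fin_num // fineK //.
by rewrite ge0_fin_numE ?reach_rew_ge0.
Qed.

End Certificate.

Section Strategies.
Variables (R : realType) (S Act : finType) (P : S -> Act -> S -> R).
Variables (T : {set S}) (rew : S -> R) (x : S -> \bar R) (r : S -> natinf).

Local Notation cert := (cert_action P T rew x r).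

Lemma Dtilde_rank_notT o s :
  ni_le (Dtilde P T o r s) (r s) -> r s <> None -> s \notin T.
Proof. by rewrite /Dtilde; case: ifP => // _; case: (r s). Qed.

Lemma cert_action_min sigma :
  (forall s, ni_le (Dtilde P T OptMax r s) (r s)) ->
  (forall s, (x s <= E_op P T rew OptMin x s)%E) ->
  strategy P sigma -> forall s, cert s (sigma s).
Proof.
move=> HD HE /forallP en s; split=> [sT _|rs].
  apply: le_trans (HE s) _; rewrite /E_op (negbTE sT) leeD2l //.
  exact: bigmin_le_cond.
move: (HD s); rewrite /Dtilde (negbTE (Dtilde_rank_notT (HD s) rs)) /=.
by rewrite (bigD1 (sigma s)) //= => /ni_max_le.
Qed.

Lemma cert_action_max_exists :
  is_MDP P ->
  (forall s, ni_le (Dtilde P T OptMin r s) (r s)) ->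
  (forall s, (x s <= E_op P T rew OptMax x s)%E) ->
  exists2 sigma, strategy P sigma & forall s, cert s (sigma s).
Proof.
move=> [_ _ enabled_ex] HD HE.
have act s : exists2 a, enabled P s a & cert s a.
  have [a0 /eqP en0] := enabled_ex s.
  case rs: (r s) => [k|].
    have := HD s; rewrite /Dtilde (negbTE (Dtilde_rank_notT (HD s) _)) ?rs //=.
    have [->//|[a ena <-] Dt_le] :=
      big_selective None (index_enum Act) (enabled P s) (Dt_val P r s) ni_min_sel.
    by exists a => //; split; rewrite rs.
  have [a ena bigE] :=
    eq_bigmax (x := -oo%E) a0 (enabled P s) (bellman_val P x s) en0
      (fun _ _ => leNye _).
  exists a => //; split=> [sT _|//]; apply: le_trans (HE s) _.
  by rewrite /E_op (negbTE sT) bigE.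
have [f en_f cert_f] := fin_all_exists2 act.
by exists [ffun s => f s] => [|s]; [apply/forallP => s|]; rewrite ffunE.
Qed.

End Strategies.

Theorem proposition7 (R : realType) (S Act : finType) (P : S -> Act -> S -> R)
  (T : {set S}) (rew : S -> R) (o : opt_kind)
  (x : S -> \bar R) (r : S -> natinf) :
  is_MDP P ->
  (forall s, 0 <= rew s) ->
  (forall s, (0 <= x s)%E) ->
  (forall s, ni_le (Dtilde P T (opt_dual o) r s) (r s)) ->
  (forall s, (x s <= E_op P T rew o x s)%E) ->
  (forall s, x s = +oo%E -> r s <> None) ->
  forall s, (exp_rew_opt P T rew o s >= x s)%E.
Proof.
move=> MDP rew_ge0 x_ge0 HD HE x_fin s.
have [P01 _ _] := MDP.
have rT u : u \in T -> r u = None.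
  by move=> uT; move: (HD u); rewrite /Dtilde uT; case: (r u).
have xT u : u \in T -> (x u <= 0)%E by move=> uT; move: (HE u); rewrite /E_op uT.
have x_le sigma : strategy P sigma ->
    (forall u, cert_action P T rew x r u (sigma u)) ->
    (x s <= exp_rew P T rew sigma s)%E.
  move=> /forallP en cert; apply: (x_le_exp_rew (r := r)) => //.
  - by move=> u v; case/andP: (P01 u (sigma u) v).
  - by move=> u; apply/eqP/en.
case: o HD HE => HD HE /=.
- apply: le_bigmin => [|sigma st]; first exact: leey.
  exact: x_le st (cert_action_min HD HE st).
- have [sigma st cert] := cert_action_max_exists MDP HD HE.
  exact: bigmax_sup st (x_le sigma st cert).
Qed.
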